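(* Let $M\subseteq\mathbb{R}^n$ be convex, $D\subseteq\mathbb{R}^n$ discrete, and $F=F_{\mathrm{QC}^n,M\cap D}$. Then $\tau_F\ge |M\cap D|-1$.
   Context: $\mathrm{QC}^n$: quasiconvex functions $f$ with convex domain in $\mathbb{R}^n$, i.e. $f(z)\le\max\{f(x),f(y)\}$ for all $x,y\in\mathrm{dom}(f)$ and $z\in(x,y)$. For a class $\mathscr{F}$ and discrete set $D'$, the problem $F=F_{\mathscr{F},D'}$ has instances $\mathrm{dom}(F)=\{f\in\mathscr{F}: D'\subseteq\mathrm{dom}(f)\}$ and asks for a point of $\arg\min_{x\in D'}f(x)$, where $f$ is accessible only through the comparison oracle answering, for $x,y\in\mathrm{dom}(f)$, whether $f(x)\le f(y)$. An algorithm is a binary decision tree whose internal nodes are comparison queries on pairs of points and whose leaves are labelled by points; it solves $F$ if for every $f\in\mathrm{dom}(F)$ all queried points lie in $\mathrm{dom}(f)$ and the reached leaf is labelled by a point of $\arg\min_{D'}f$. $\tau_F$ is the minimum, over all algorithms solving $F$, of the maximal number of queries on a root-to-leaf path (worst-case number of oracle calls). *)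

From Stdlib Require Fin.
From Stdlib Require Import Reals List.
Open Scope R_scope.

Definition pt (n : nat) : Type := Fin.t n -> R.

Definition comb {n : nat} (t : R) (x y : pt n) : pt n :=
  fun i => (1 - t) * x i + t * y i.

Definition convex_set {n : nat} (C : pt n -> Prop) : Prop :=
  forall x y t, C x -> C y -> 0 <= t <= 1 -> C (comb t x y).

(* Discrete: every point of D is isolated in D (sup-norm balls, which
   generate the usual topology of R^n). *)
Definition discrete_set {n : nat} (D : pt n -> Prop) : Prop :=
  forall x, D x -> exists eps, 0 < eps /\
    forall y, D y -> (forall i, Rabs (y i - x i) < eps) -> y = x.

(* A function with domain: its domain [dom] and values [f] (values outside
   [dom] are irrelevant). *)
Record fn (n : nat) := mkFn { dom : pt n -> Prop; val : pt n -> R }.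
Arguments dom {n}. Arguments val {n}.

Definition quasiconvex {n : nat} (f : fn n) : Prop :=
  convex_set (dom f) /\
  forall x y t, dom f x -> dom f y -> 0 < t < 1 ->
    val f (comb t x y) <= Rmax (val f x) (val f y).

(* Comparison-oracle algorithms: binary decision trees. [Node x y l r] asks
   whether f(x) <= f(y); on "yes" it continues with [l], else with [r]. *)
Inductive dtree (n : nat) : Type :=
| Leaf : pt n -> dtree n
| Node : pt n -> pt n -> dtree n -> dtree n -> dtree n.
Arguments Leaf {n}. Arguments Node {n}.

Fixpoint depth {n : nat} (T : dtree n) : nat :=
  match T with
  | Leaf _ => 0
  | Node _ _ l r => S (Nat.max (depth l) (depth r))
  end.

Fixpoint run_ok {n : nat} (f : fn n) (D' : pt n -> Prop) (T : dtree n) : Prop :=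
  match T with
  | Leaf p => D' p /\ forall z, D' z -> val f p <= val f z
  | Node x y l r =>
      dom f x /\ dom f y /\
      match Rle_dec (val f x) (val f y) with
      | left _ => run_ok f D' l
      | right _ => run_ok f D' r
      end
  end.

Definition solves_QC {n : nat} (D' : pt n -> Prop) (T : dtree n) : Prop :=
  forall f : fn n, quasiconvex f -> (forall x, D' x -> dom f x) -> run_ok f D' T.

(* For each point p of M ∩ D, the function that is 0 at p and 1 elsewhere on M
   is quasiconvex, and its only minimiser on M ∩ D is p.  On this instance the
   query f(x) <= f(y) can fail only when y = p, so the run follows the left
   spine of the tree until it queries p or ends at the leaf p.  Hence every
   point of M ∩ D occurs among the depth + 1 points of the left spine. *)

From Stdlib Require Import Reals List.
From Stdlib Require Import Lra Lia ClassicalDescription FunctionalExtensionality.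

Fixpoint left_spine {n : nat} (T : dtree n) : list (pt n) :=
  match T with
  | Leaf p => p :: nil
  | Node _ y l _ => y :: left_spine l
  end.

Lemma length_left_spine {n : nat} (T : dtree n) :
  (length (left_spine T) <= S (depth T))%nat.
Proof.
  induction T as [p | x y l IHl r _]; simpl; [lia |].
  pose proof (Nat.le_max_l (depth l) (depth r)); lia.
Qed.

Definition point_dip {n : nat} (C : pt n -> Prop) (p : pt n) : fn n :=
  mkFn n C (fun z => if excluded_middle_informative (z = p) then 0 else 1).

Lemma point_dip_le1 {n : nat} (C : pt n -> Prop) (p z : pt n) :
  val (point_dip C p) z <= 1.
Proof. simpl; destruct excluded_middle_informative; lra. Qed.

Lemma point_dip_at {n : nat} (C : pt n -> Prop) (p : pt n) :
  val (point_dip C p) p = 0.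
Proof. simpl; destruct excluded_middle_informative; easy. Qed.

Lemma point_dip_neq {n : nat} (C : pt n -> Prop) (p z : pt n) :
  z <> p -> val (point_dip C p) z = 1.
Proof. simpl; destruct excluded_middle_informative; easy. Qed.

Lemma point_dip_min {n : nat} (C : pt n -> Prop) (p z : pt n) :
  val (point_dip C p) p <= val (point_dip C p) z.
Proof.
  rewrite point_dip_at; simpl; destruct excluded_middle_informative; lra.
Qed.

Lemma comb_diag {n : nat} (t : R) (p : pt n) : comb t p p = p.
Proof. apply functional_extensionality; intro i; unfold comb; ring. Qed.

Lemma point_dip_quasiconvex {n : nat} (C : pt n -> Prop) (p : pt n) :
  convex_set C -> quasiconvex (point_dip C p).
Proof.
  intros HC; split; [exact HC |].
  intros x y t _ _ _.
  destruct (excluded_middle_informative (comb t x y = p)) as [Hz | Hz].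
  - rewrite Hz.
    eapply Rle_trans; [apply (point_dip_min C p x) | apply Rmax_l].
  - eapply Rle_trans; [apply point_dip_le1 |].
    destruct (excluded_middle_informative (x = p)) as [-> | Hx].
    + assert (Hy : y <> p) by (intros ->; apply Hz, comb_diag).
      rewrite (point_dip_neq C p y Hy); apply Rmax_r.
    + rewrite (point_dip_neq C p x Hx); apply Rmax_l.
Qed.

Lemma run_ok_point_dip_in_left_spine {n : nat} (C D' : pt n -> Prop)
    (p : pt n) (T : dtree n) :
  D' p -> run_ok (point_dip C p) D' T -> In p (left_spine T).
Proof.
  intros Hp; induction T as [q | x y l IHl r _]; cbn [run_ok left_spine In].
  - intros [_ Hmin].
    destruct (excluded_middle_informative (q = p)) as [-> | Hq]; [now left |].
    specialize (Hmin p Hp).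
    rewrite (point_dip_neq C p q Hq), point_dip_at in Hmin; lra.
  - intros [_ [_ Hrun]].
    destruct (excluded_middle_informative (y = p)) as [-> | Hy]; [now left |].
    right; apply IHl.
    destruct Rle_dec as [_ | Hnle]; [exact Hrun |].
    exfalso; apply Hnle.
    rewrite (point_dip_neq C p y Hy); apply point_dip_le1.
Qed.

Theorem mainTheorem8 (n : nat) (M D : pt n -> Prop) :
  convex_set M -> discrete_set D ->
  forall (pts : list (pt n)), NoDup pts ->
    (forall p, In p pts -> M p /\ D p) ->
  forall T : dtree n, solves_QC (fun x => M x /\ D x) T ->
    (length pts - 1 <= depth T)%nat.
Proof.
  intros HM _ pts Hnd Hpts T HT.
  assert (Hincl : incl pts (left_spine T)).
  { intros p Hp.
    apply (run_ok_point_dip_in_left_spine M (fun x => M x /\ D x)); [auto |].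
    apply HT; [now apply point_dip_quasiconvex | now intros x [Hx _]]. }
  pose proof (NoDup_incl_length Hnd Hincl).
  pose proof (length_left_spine T).
  lia.
Qed.
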